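(* For every integer $q\ge 6$ there exists a good $\mathcal{SOS}_q(2)$ of period $\frac{(q-2)(q-4)}{2}$ if $q\equiv 0\pmod 4$, $\frac{(q-3)(q-5)}{2}$ if $q\equiv 1\pmod 4$, $\frac{(q-2)(q-6)}{2}$ if $q\equiv 2\pmod 4$, and $\frac{(q-3)(q-7)}{2}$ if $q\equiv 3\pmod 4$.
   Context: For a periodic sequence $S=(s_i)$ over $\mathbb{Z}_q$ write $\mathbf{s}_n(i)=(s_i,\ldots,s_{i+n-1})$; $\mathbf{u}^R$ denotes the reverse of a tuple and $-\mathbf{u}$ its termwise negative. An $\mathcal{SOS}_q(n)$ is a periodic sequence of period $m$ over $\mathbb{Z}_q$ such that $\mathbf{s}_n(i)=\mathbf{s}_n(j)$ implies $i\equiv j\pmod m$, and $\mathbf{s}_n(i)\neq\mathbf{s}_n(j)^R$ and $\mathbf{s}_n(i)\neq-\mathbf{s}_n(j)^R$ for all $i,j$. It is good if every run of consecutive $0$ terms has length at most $n-2$ (for $n=2$: no term equals $0$). *)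

From mathcomp Require Import all_boot all_order all_algebra.
Set Implicit Arguments. Unset Strict Implicit. Unset Printing Implicit Defensive.
Import GRing.Theory.
Local Open Scope ring_scope.

(* A periodic sequence of period m over Z_q is represented by one period
   w = (s_0, ..., s_{m-1}) (size w = m); s_i = nth 0 w (i mod m). *)

Definition window (q : nat) (w : seq 'Z_q) (n i : nat) : seq 'Z_q :=
  mkseq (fun k => nth 0 w ((i + k) %% size w)) n.

Definition is_SOS (q n : nat) (w : seq 'Z_q) : Prop :=
  [/\ (forall i j : nat, (i < size w)%N -> (j < size w)%N ->
          window w n i = window w n j -> i = j),
      (forall i j : nat, (i < size w)%N -> (j < size w)%N ->
          window w n i <> rev (window w n j))
    & (forall i j : nat, (i < size w)%N -> (j < size w)%N ->
          window w n i <> map (fun x => - x) (rev (window w n j)))].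

(* good: every (cyclic) run of consecutive 0 terms has length at most n-2,
   i.e. no n-1 cyclically consecutive terms are all 0. For n = 2 this says
   no term equals 0. *)
Definition is_good (q n : nat) (w : seq 'Z_q) : Prop :=
  forall i : nat, (i < size w)%N -> ~ all (fun x => x == 0) (window w n.-1 i).

Definition sos_period (q : nat) : nat :=
  match (q %% 4)%N with
  | 0 => ((q - 2) * (q - 4)) %/ 2
  | 1 => ((q - 3) * (q - 5)) %/ 2
  | 2 => ((q - 2) * (q - 6)) %/ 2
  | _ => ((q - 3) * (q - 7)) %/ 2
  end%N.

From mathcomp Require Import all_boot all_order all_algebra.
From mathcomp Require Import zify.
Set Implicit Arguments. Unset Strict Implicit. Unset Printing Implicit Defensive.
Import GRing.Theory.

(* Identify Z_2k with the nonzero residues -k, ..., -1, 1, ..., k of Z_q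
   (possible as 2k < q); negation becomes translation by k. A cyclic walk
   A_0, ..., A_(L-1) in Z_2k whose edges (A_i, A_(i+1)) are pairwise distinct,
   and in which no two steps A_(i+1) - A_i, A_(j+1) - A_j (i = j allowed) are
   opposite, is then a good SOS_q(2) of period L: a window equal to a reversed,
   or negated reversed, window forces two opposite steps.
   For q = 4l + 2, 4l + 3 walk in Z_4l cycling through the steps
   {1, ..., 2l - 1} \ {l + 1}; their sum 2l^2 - 2l - 1 is prime to 4l, so the
   4l(2l - 2) edges are distinct. For q = 4h + 4, 4h + 5 walk in Z_k,
   k = 2h + 1, cycling through the steps 1, ..., h (sum prime to k), and lift
   the k h edges four times to Z_2k by adding k times a bit of the lap number. *)

Lemma eqn_modM2r d p m n :
  coprime d p -> (m * p == n * p %[mod d]) = (m == n %[mod d]).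
Proof.
move=> cop_dp; wlog le_nm : m n / n <= m.
  move=> IH; case: (leqP n m) => [|/ltnW] /IH //.
  by rewrite eq_sym [RHS]eq_sym.
by rewrite !eqn_mod_dvd ?leq_mul2r ?le_nm ?orbT // -mulnBl Gauss_dvdl.
Qed.

Lemma eqn_mod4 r s : (r == s %[mod 4]) = (odd r == odd s) && (odd r./2 == odd s./2).
Proof.
have mod4_bits n : n %% 4 = odd n + (odd n./2).*2 by lia.
rewrite !mod4_bits.
by case: (odd r) (odd s) (odd r./2) (odd s./2) => [] [] [] [].
Qed.

Definition periodic (L : nat) (A : nat -> nat) := forall i, A (i %% L) = A i.

Definition distinct_edges (L : nat) (A : nat -> nat) :=
  forall i j, A i = A j -> A i.+1 = A j.+1 -> i = j %[mod L].

Definition no_opposite_steps (N : nat) (A : nat -> nat) :=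
  forall i j, A i.+1 + A j.+1 != A i + A j %[mod N].

Lemma natr_Zp_inj q a b : 1 < q -> a < q -> b < q -> (a%:R : 'Z_q)%R = b%:R%R -> a = b.
Proof.
move=> q_gt1 lt_aq lt_bq /(congr1 val) /=.
by rewrite !val_Zp_nat // !modn_small.
Qed.

Section SignedLabel.
Local Open Scope ring_scope.
Variables (q k : nat).

Definition signed_label (a : nat) : 'Z_q :=
  if (a < k)%N then a.+1%:R else - (a - k).+1%:R.

Lemma signed_label_shift a : (a < 2 * k)%N ->
  signed_label ((a + k) %% (2 * k)) = - signed_label a.
Proof.
move=> lt_a2k; rewrite /signed_label; case: (ltnP a k) => [lt_ak | le_ka].
  by rewrite modn_small ?ifF ?addnK //; lia.
have -> : ((a + k) %% (2 * k) = a - k)%N.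
  by rewrite (_ : a + k = 1 * (2 * k) + (a - k))%N ?modnMDl ?modn_small; lia.
by rewrite ifT ?opprK //; lia.
Qed.

Hypothesis k2_lt_q : (2 * k < q)%N.

Lemma signed_label_neq0 a : (a < 2 * k)%N -> signed_label a != 0.
Proof.
move=> lt_a2k; rewrite /signed_label.
by case: ifP => _; rewrite ?oppr_eq0; apply/eqP => /(@natr_Zp_inj q _ 0); lia.
Qed.

Lemma signed_label_inj a b : (a < 2 * k)%N -> (b < 2 * k)%N ->
  signed_label a = signed_label b -> a = b.
Proof.
move=> lt_a2k lt_b2k; rewrite /signed_label.
have no_mix x y : (x.+1 + y.+1 < q)%N -> (x.+1%:R : 'Z_q) <> - y.+1%:R.
  move=> lt_q /eqP; rewrite -subr_eq0 opprK -natrD.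
  by move=> /eqP /(@natr_Zp_inj q _ 0); lia.
case: ifP => lt_ak; case: ifP => lt_bk.
- by move=> /natr_Zp_inj; lia.
- by move=> /no_mix; lia.
- by move=> /esym /no_mix; lia.
- by move=> /oppr_inj /natr_Zp_inj; lia.
Qed.

End SignedLabel.

Lemma sos_of_walk q k L (A : nat -> nat) :
  2 * k < q -> (forall i, A i < 2 * k) -> periodic L A ->
  distinct_edges L A -> no_opposite_steps (2 * k) A ->
  exists w : seq 'Z_q, size w = L /\ is_SOS 2 w /\ is_good 2 w.
Proof.
move=> k2_lt_q A_lt A_per A_edges A_steps.
pose label := signed_label q k.
have label_inj a b : a < 2 * k -> b < 2 * k -> label a = label b -> a = b.
  exact: signed_label_inj.
have label_A_inj i j : label (A i) = label (A j) -> A i = A j by apply: label_inj.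
have mod_lt x : x %% (2 * k) < 2 * k by rewrite ltn_pmod // (leq_ltn_trans _ (A_lt 0)).
exists [seq label (A i) | i <- iota 0 L]; set w := [seq _ | _ <- _].
have size_w : size w = L by rewrite size_map size_iota.
have nth_w i : i < L -> nth 0%R w i = label (A i).
  by move=> lt_iL; rewrite (nth_map 0) ?size_iota ?nth_iota.
have window_w i : i < L -> window w 2 i = [:: label (A i); label (A i.+1)].
  move=> lt_iL; have L_gt0 : 0 < L by apply: leq_ltn_trans lt_iL.
  by rewrite /window /mkseq /= size_w addn0 addn1 !nth_w ?ltn_pmod ?A_per.
rewrite size_w; split=> //; split; first split; rewrite ?size_w.
- move=> i j lt_iL lt_jL; rewrite !window_w //.
  move=> -[/label_A_inj eq_i /label_A_inj eq_i1].
  by have := A_edges i j eq_i eq_i1; rewrite !modn_small.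
- move=> i j lt_iL lt_jL; rewrite !window_w //=.
  move=> -[/label_A_inj eq_i /label_A_inj eq_i1].
  by have := A_steps i j; rewrite eq_i eq_i1 addnC eqxx.
- move=> i j lt_iL lt_jL; rewrite !window_w //= -!signed_label_shift //.
  move=> -[/(label_inj _ _ (A_lt _) (mod_lt _)) eq_i].
  move=> /(label_inj _ _ (A_lt _) (mod_lt _)) eq_i1.
  have := A_steps i j; rewrite eq_i eq_i1 !modnDml.
  by rewrite (_ : A j.+1 + k + A j = A j + k + A j.+1) ?eqxx //; lia.
- move=> i; rewrite size_w => lt_iL.
  rewrite /window /mkseq /= size_w addn0 modn_small // nth_w //.
  by rewrite andbT; apply/negP/signed_label_neq0.
Qed.

Section PeriodicStepWalk.
Variables (M m : nat) (step : nat -> nat).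
Hypothesis m_gt0 : 0 < m.
Hypothesis step_sum_bounds : forall s t, s < m -> t < m -> 0 < step s + step t < M.
Hypothesis step_inj : {in gtn m &, injective step}.
Hypothesis step_sum_coprime : coprime M (\sum_(t < m) step t).

Definition walk_sum n := \sum_(t < n) step (t %% m).
Definition walk n := walk_sum n %% M.

Lemma step_lt t : step (t %% m) < M.
Proof.
have /andP[_] := step_sum_bounds (ltn_pmod t m_gt0) (ltn_pmod t m_gt0).
by apply: leq_ltn_trans; rewrite leq_addr.
Qed.

Lemma walk_sumMD a b : walk_sum (a * m + b) = a * walk_sum m + walk_sum b.
Proof.
elim: a => [|a IH]; first by rewrite mul0n.
rewrite mulSn -addnA {1}/walk_sum big_split_ord /=.
under [X in _ + X]eq_bigr do rewrite modnDl.
by rewrite -!/(walk_sum _) IH mulSn addnA.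
Qed.

Lemma walk_sum_period : walk_sum m = \sum_(t < m) step t.
Proof. by apply: eq_bigr => t _; rewrite modn_small. Qed.

Lemma walk_lt n : walk n < M.
Proof. by rewrite ltn_pmod // (leq_ltn_trans _ (step_lt 0)). Qed.

Lemma walk_periodic : periodic (M * m) walk.
Proof.
move=> n; rewrite /walk [in RHS](divn_eq n (M * m)) mulnA walk_sumMD.
by rewrite mulnAC modnMDl.
Qed.

Lemma walk_succ n : walk n.+1 = (walk n + step (n %% m)) %% M.
Proof. by rewrite /walk /walk_sum modnDml big_ord_recr. Qed.

Lemma walk_no_opposite_steps : no_opposite_steps M walk.
Proof.
move=> i j; rewrite !walk_succ modnDm addnACA -{2}[walk i + walk j]addn0.
have /andP[sum_gt0 sum_ltM] := step_sum_bounds (ltn_pmod i m_gt0) (ltn_pmod j m_gt0).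
by rewrite eqn_modDl mod0n modn_small // -lt0n.
Qed.

Lemma walk_distinct_edges : distinct_edges (M * m) walk.
Proof.
move=> i j eq_ij; rewrite !walk_succ eq_ij => /eqP.
rewrite eqn_modDl !(modn_small (step_lt _)) => /eqP /step_inj.
rewrite !inE !ltn_pmod // => /(_ isT isT) eq_mod.
move: eq_ij; rewrite /walk (divn_eq i m) (divn_eq j m) eq_mod !walk_sumMD => /eqP.
rewrite eqn_modDr eqn_modM2r ?walk_sum_period // => /eqP eq_div.
by apply/eqP; rewrite eqn_modDr -!muln_modl eq_div.
Qed.

End PeriodicStepWalk.

Section FourfoldLift.
Variables (k N : nat) (X : nat -> nat).

(* Inside a lap the two bits of the lap number alternate, so two consecutive
   bits give both; across the end of a lap the pair (either bit of r, bit 1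
   of r + 1) still determines r mod 4. *)
Definition lap_bit i := let r := i %/ N in if odd (i %% N) then odd r else odd r./2.

Definition fourfold_lift i := X i + k * lap_bit i.

Lemma lap_bit_periodic : periodic (4 * N) lap_bit.
Proof.
move=> i; rewrite /lap_bit modn_dvdm ?dvdn_mull // -modn_divl.
by have /eqP := modn_mod (i %/ N) 4; rewrite eqn_mod4 => /andP[/eqP-> /eqP->].
Qed.

Hypothesis X_lt : forall i, X i < k.

Lemma fourfold_lift_lt i : fourfold_lift i < 2 * k.
Proof. by have := X_lt i; rewrite /fourfold_lift; case: lap_bit => /=; lia. Qed.

Lemma fourfold_lift_modk i : fourfold_lift i %% k = X i.
Proof. by rewrite /fourfold_lift addnC mulnC modnMDl modn_small. Qed.

Lemma fourfold_lift_inj i j :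
  fourfold_lift i = fourfold_lift j -> X i = X j /\ lap_bit i = lap_bit j.
Proof.
move=> eq_ij; split; first by rewrite -!fourfold_lift_modk eq_ij.
have k_gt0 : 0 < k by apply: leq_ltn_trans (X_lt i).
move/(congr1 (fun n => odd (n %/ k))): eq_ij.
rewrite /fourfold_lift !(addnC (X _)) !(mulnC k) !divnMDl //.
by rewrite !divn_small // !addn0 !oddb.
Qed.

Lemma fourfold_lift_no_opposite_steps :
  no_opposite_steps k X -> no_opposite_steps (2 * k) fourfold_lift.
Proof.
move=> X_steps i j; apply: contra (X_steps i j) => /eqP eq2k; apply/eqP.
move/(congr1 (modn^~ k)): eq2k; rewrite !modn_dvdm ?dvdn_mull //.
by rewrite -(modnDm (fourfold_lift i.+1)) -(modnDm (fourfold_lift i)) !fourfold_lift_modk.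
Qed.

Hypothesis X_per : periodic N X.

Lemma fourfold_lift_periodic : periodic (4 * N) fourfold_lift.
Proof.
move=> i; rewrite /fourfold_lift lap_bit_periodic.
by rewrite -X_per modn_dvdm ?dvdn_mull // X_per.
Qed.

Hypothesis N_gt0 : 0 < N.

Lemma lap_bit_succ i : lap_bit i.+1 =
  if N %| i.+1 then odd (i %/ N) (+) odd (i %/ N)./2 else
  if odd (i %% N) then odd (i %/ N)./2 else odd (i %/ N).
Proof.
rewrite /lap_bit modnS divnS //; case: (N %| i.+1) => /=.
  by rewrite add0n uphalf_half oddD oddb.
by rewrite add0n; case: odd.
Qed.

Lemma lap_bits_distinct i j : i = j %[mod N] ->
  lap_bit i = lap_bit j -> lap_bit i.+1 = lap_bit j.+1 -> i %/ N = j %/ N %[mod 4].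
Proof.
move=> eq_ij; have eq_dvd : (N %| i.+1) = (N %| j.+1).
  by rewrite /dvdn -addn1 -modnDml eq_ij modnDml addn1.
rewrite !lap_bit_succ /lap_bit eq_dvd eq_ij => eq_bit eq_bit1.
apply/eqP; rewrite eqn_mod4; move: eq_bit eq_bit1.
by case: (N %| j.+1) (odd (j %% N)) (odd (i %/ N)) (odd (i %/ N)./2)
  (odd (j %/ N)) (odd (j %/ N)./2) => [] [] [] [] [] [].
Qed.

Lemma fourfold_lift_distinct_edges :
  distinct_edges N X -> distinct_edges (4 * N) fourfold_lift.
Proof.
move=> X_edges i j /fourfold_lift_inj[eq_X eq_b] /fourfold_lift_inj[eq_X1 eq_b1].
have eq_mod := X_edges i j eq_X eq_X1.
have eq_lap := lap_bits_distinct eq_mod eq_b eq_b1.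
rewrite (divn_eq i N) (divn_eq j N) eq_mod.
by apply/eqP; rewrite eqn_modDr -!muln_modl eq_lap.
Qed.

End FourfoldLift.

Definition even_step (l t : nat) := if t < l then t.+1 else t.+2.

Lemma double_sum_even_step l n : 2 * \sum_(t < n) even_step l t = n * n.+1 + 2 * (n - l).
Proof.
elim: n => [|n IH]; first by rewrite big_ord0.
by rewrite big_ord_recr /= mulnDr IH /even_step; case: ifP; lia.
Qed.

Lemma coprime_sum_even_step l : 2 <= l ->
  coprime (4 * l) (\sum_(t < 2 * l - 2) even_step l t).
Proof.
move=> l_ge2; set s := \sum_(t < _) _.
have s_eq : s.+1 = 2 * l * (l - 1).
  by have := double_sum_even_step l (2 * l - 2); rewrite -/s; nia.
have -> : 4 * l = 2 * (2 * l) by rewrite mulnA.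
rewrite coprimeMl; apply/andP; split.
  by rewrite coprime2n -[odd s]negbK -oddS s_eq -mulnA oddM.
by apply: coprime_dvdl (coprimeSn s); rewrite s_eq dvdn_mulr.
Qed.

Lemma sos2_of_even_walk q l : 2 <= l -> 4 * l < q ->
  exists w : seq 'Z_q, size w = 4 * l * (2 * l - 2) /\ is_SOS 2 w /\ is_good 2 w.
Proof.
move=> l_ge2 lt_q; have m_gt0 : 0 < 2 * l - 2 by lia.
have bounds s t : s < 2 * l - 2 -> t < 2 * l - 2 ->
    0 < even_step l s + even_step l t < 4 * l.
  by rewrite /even_step; case: ifP; case: ifP; lia.
have inj : {in gtn (2 * l - 2) &, injective (even_step l)}.
  by move=> s t _ _; rewrite /even_step; case: ifP; case: ifP; lia.
have cop := coprime_sum_even_step l_ge2.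
apply: (@sos_of_walk q (2 * l) _ (walk (4 * l) (2 * l - 2) (even_step l))).
- lia.
- by move=> i; rewrite mulnA; apply: (walk_lt m_gt0 bounds).
- exact: walk_periodic.
- exact: walk_distinct_edges.
- by rewrite mulnA; apply: walk_no_opposite_steps.
Qed.

Lemma double_sum_succ n : 2 * \sum_(t < n) t.+1 = n * n.+1.
Proof.
elim: n => [|n IH]; first by rewrite big_ord0.
by rewrite big_ord_recr /= mulnDr IH; lia.
Qed.

Lemma coprime_sum_succ h : coprime (2 * h + 1) (\sum_(t < h) t.+1).
Proof.
apply: (@coprime_dvdr _ (h * h.+1)); first by rewrite -double_sum_succ dvdn_mull.
rewrite coprimeMr; apply/andP; split.
  by rewrite coprime_sym /coprime gcdnMDl gcdn1.
have -> : 2 * h + 1 = 1 * h.+1 + h by lia.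
by rewrite coprime_sym /coprime gcdnMDl; apply: coprimeSn.
Qed.

Lemma sos2_of_odd_walk q h : 1 <= h -> 2 * (2 * h + 1) < q ->
  exists w : seq 'Z_q, size w = 4 * ((2 * h + 1) * h) /\ is_SOS 2 w /\ is_good 2 w.
Proof.
move=> h_ge1 lt_q; set k := 2 * h + 1.
have bounds s t : s < h -> t < h -> 0 < s.+1 + t.+1 < k by lia.
have inj : {in gtn h &, injective succn} by move=> s t _ _ [].
have N_gt0 : 0 < k * h by rewrite muln_gt0; lia.
pose X := walk k h succn.
have X_lt i : X i < k by apply: (walk_lt h_ge1 bounds).
have X_per : periodic (k * h) X by apply: walk_periodic.
apply: (@sos_of_walk q k _ (fourfold_lift k (k * h) X)).
- exact: lt_q.
- exact: fourfold_lift_lt.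
- exact: fourfold_lift_periodic.
- exact/fourfold_lift_distinct_edges/walk_distinct_edges/coprime_sum_succ.
- exact/fourfold_lift_no_opposite_steps/(walk_no_opposite_steps h_ge1 bounds).
Qed.

Theorem corollary4p7 (q : nat) (hq : (6 <= q)%N) :
  exists w : seq 'Z_q,
    size w = sos_period q /\ is_SOS 2 w /\ is_good 2 w.
Proof.
have q_eq := divn_eq q 4; set t := q %/ 4 in q_eq.
rewrite /sos_period; move: (ltn_pmod q (isT : 0 < 4)) q_eq.
case: (q %% 4) => [|[|[|[|r]]]] // _ q_eq.
1,2: case: (@sos2_of_odd_walk q (t - 1)) => [||w [size_w sos_w]]; try lia;
  by exists w; rewrite size_w; split => //; nia.
all: have [le_t1 | lt_1t] := leqP t 1.
1,3: by exists [::]; split; [rewrite /=; nia | split; [split | ]].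
all: case: (@sos2_of_even_walk q t) => [||w [size_w sos_w]]; try lia;
  by exists w; rewrite size_w; split => //; nia.
Qed.
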